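(* (1) Let $(\mathcal T,(N_A,R_A),(N_B,R_B),\mathbb C,\xi)$ be an object of $\mathrm{RArr}(\mathcal A,\mathcal B)$, i.e. $\mathbb C=(C,\Delta,\varepsilon)$ is a comonad on $\mathcal A$ and $(R_A,\xi)$ is a comonad arrow from $\mathbb C$ to $N_BR_B$ with $\xi:CR_A\to R_AN_BR_B$ invertible. Then $(\mathcal T,(N_A,R_A),(N_B,R_B),\tau)$ is a pre-torsor, where $\tau=(\xi N_AR_AN_B)\circ(C\eta^AR_AN_B)\circ(\xi^{-1}N_B)\circ(R_AN_B\eta^B)$. (2) If $(F,t)$ is a morphism $(\mathcal T,(N_A,R_A),(N_B,R_B),\mathbb C,\xi)\to(\mathcal T',(N'_A,R'_A),(N'_B,R'_B),\mathbb C',\xi')$ in $\mathrm{RArr}(\mathcal A,\mathcal B)$, then $F$ is a morphism between the corresponding pre-torsors of (1).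
   Context: Conventions: $\circ$ vertical composition, juxtaposition horizontal composition; a functor's name denotes its identity transformation. Adjunctions $(N_A:\mathcal A\to\mathcal T,R_A)$, $(N_B:\mathcal B\to\mathcal T,R_B)$ with units $\eta^A,\eta^B$, counits $\epsilon^A,\epsilon^B$; $N_BR_B$ is a comonad on $\mathcal T$ with comultiplication $N_B\eta^BR_B$, counit $\epsilon^B$. A comonad arrow $(R_A,\xi)$ from $\mathbb C$ to $N_BR_B$ means $\xi:CR_A\to R_AN_BR_B$ with $(R_A\epsilon^B)\circ\xi=\varepsilon R_A$ and $(R_AN_B\eta^BR_B)\circ\xi=(\xi N_BR_B)\circ(C\xi)\circ(\Delta R_A)$. Pre-torsor: natural $\tau:R_AN_B\to R_AN_BR_BN_AR_AN_B$ with $(R_AN_BR_B\epsilon^AN_B)\circ\tau=R_AN_B\eta^B$, $(R_A\epsilon^BN_AR_AN_B)\circ\tau=\eta^AR_AN_B$, $(R_AN_BR_BN_A\tau)\circ\tau=(\tau R_BN_AR_AN_B)\circ\tau$. For a functor $F:\mathcal T'\to\mathcal T$ with $R_AF=R'_A$, $R_BF=R'_B$ put $a=(\epsilon^AFN'_A)\circ(N_A\eta'^A)$, $b=(\epsilon^BFN'_B)\circ(N_B\eta'^B)$. A morphism of pre-torsors is such $F$ with $(R_AbR_BaR_Ab)\circ\tau=\tau'\circ(R_Ab)$. A morphism in $\mathrm{RArr}(\mathcal A,\mathcal B)$ is a pair $(F,t)$ with $F$ such a functor and $t:\mathbb C\to\mathbb C'$ a comonad morphism satisfying $(R_AbR'_B)\circ(\xi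 F)=\xi'\circ(tR'_A)$. *)

(* Natural transformations are handled through their component families;
   an equation between natural transformations is stated componentwise. *)
Set Implicit Arguments.
Unset Strict Implicit.

Record Category := {
  ob :> Type;
  hom : ob -> ob -> Type;
  idm : forall a, hom a a;
  cmp : forall a b c, hom b c -> hom a b -> hom a c;
  cmp_id_l : forall a b (f : hom a b), cmp (idm b) f = f;
  cmp_id_r : forall a b (f : hom a b), cmp f (idm a) = f;
  cmp_assoc : forall a b c d (f : hom a b) (g : hom b c) (h : hom c d),
      cmp h (cmp g f) = cmp (cmp h g) f }.
Arguments hom {c} _ _ : rename.
Arguments idm {c} a : rename.
Arguments cmp {c a b c0} _ _ : rename.

(* vertical composition: g \oc f = "g after f" *)
Notation "g \oc f" := (cmp g f) (at level 40, left associativity).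

Record Functor (C D : Category) := {
  fobj :> C -> D;
  fmap : forall a b : C, hom a b -> hom (fobj a) (fobj b);
  fmap_id : forall a : C, fmap (idm a) = idm (fobj a);
  fmap_comp : forall (a b c : C) (f : hom a b) (g : hom b c),
      fmap (g \oc f) = fmap g \oc fmap f }.
Arguments fmap {C D} F {a b} _ : rename.

Definition Fcomp (C D E : Category) (G : Functor D E) (F : Functor C D)
  : Functor C E.
Proof.
  refine {| fobj := fun x => G (F x);
            fmap := fun a b f => fmap G (fmap F f) |}.
  - intro a. rewrite !fmap_id. reflexivity.
  - intros a b c f g. rewrite !fmap_comp. reflexivity.
Defined.

Record Adjunction (A T : Category) (N : Functor A T) (R : Functor T A) := {
  unit : forall x : A, hom x (R (N x));
  counit : forall y : T, hom (N (R y)) y;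
  unit_nat : forall (x x' : A) (f : hom x x'),
      unit x' \oc f = fmap R (fmap N f) \oc unit x;
  counit_nat : forall (y y' : T) (g : hom y y'),
      g \oc counit y = counit y' \oc fmap N (fmap R g);
  triangle_N : forall x : A, counit (N x) \oc fmap N (unit x) = idm (N x);
  triangle_R : forall y : T, fmap R (counit y) \oc unit (R y) = idm (R y) }.
Arguments unit {A T N R} _ x : rename.
Arguments counit {A T N R} _ y : rename.

Record Comonad (A : Category) := {
  cfun :> Functor A A;
  delta : forall x : A, hom (cfun x) (cfun (cfun x));
  ceps : forall x : A, hom (cfun x) x;
  delta_nat : forall (x x' : A) (f : hom x x'),
      delta x' \oc fmap cfun f = fmap cfun (fmap cfun f) \oc delta x;
  ceps_nat : forall (x x' : A) (f : hom x x'),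
      ceps x' \oc fmap cfun f = f \oc ceps x;
  counit_l : forall x : A, ceps (cfun x) \oc delta x = idm (cfun x);
  counit_r : forall x : A, fmap cfun (ceps x) \oc delta x = idm (cfun x);
  coassoc : forall x : A,
      delta (cfun x) \oc delta x = fmap cfun (delta x) \oc delta x }.
Arguments delta {A} _ x : rename.
Arguments ceps {A} _ x : rename.

Section RArr.
Variables (A B : Category).

(* Object (T,(N_A,R_A),(N_B,R_B),C,xi) of RArr(A,B): (R_A,xi) is a comonad
   arrow from C to the comonad N_B R_B (comultiplication N_B eta^B R_B,
   counit eps^B), and xi is invertible with inverse xiinv. *)
Definition is_RArr_object (T : Category)
  (NA : Functor A T) (RA : Functor T A) (adjA : Adjunction NA RA)
  (NB : Functor B T) (RB : Functor T B) (adjB : Adjunction NB RB)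
  (C : Comonad A)
  (xi : forall y : T, hom (C (RA y)) (RA (NB (RB y))))
  (xiinv : forall y : T, hom (RA (NB (RB y))) (C (RA y))) : Prop :=
  (forall (y y' : T) (g : hom y y'),
      xi y' \oc fmap C (fmap RA g) = fmap RA (fmap NB (fmap RB g)) \oc xi y)
  /\ (forall y : T, fmap RA (counit adjB y) \oc xi y = ceps C (RA y))
  /\ (forall y : T,
      fmap RA (fmap NB (unit adjB (RB y))) \oc xi y
      = xi (NB (RB y)) \oc fmap C (xi y) \oc delta C (RA y))
  /\ (forall y : T, xiinv y \oc xi y = idm (C (RA y)))
  /\ (forall y : T, xi y \oc xiinv y = idm (RA (NB (RB y)))).

Definition tau_of (T : Category)
  (NA : Functor A T) (RA : Functor T A) (adjA : Adjunction NA RA)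
  (NB : Functor B T) (RB : Functor T B) (adjB : Adjunction NB RB)
  (C : Comonad A)
  (xi : forall y : T, hom (C (RA y)) (RA (NB (RB y))))
  (xiinv : forall y : T, hom (RA (NB (RB y))) (C (RA y))) (b : B)
  : hom (RA (NB b)) (RA (NB (RB (NA (RA (NB b)))))) :=
  xi (NA (RA (NB b))) \oc fmap C (unit adjA (RA (NB b)))
    \oc xiinv (NB b) \oc fmap RA (fmap NB (unit adjB b)).

Definition is_pre_torsor (T : Category)
  (NA : Functor A T) (RA : Functor T A) (adjA : Adjunction NA RA)
  (NB : Functor B T) (RB : Functor T B) (adjB : Adjunction NB RB)
  (tau : forall b : B, hom (RA (NB b)) (RA (NB (RB (NA (RA (NB b))))))) : Prop :=
  (forall (b b' : B) (f : hom b b'),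
      tau b' \oc fmap RA (fmap NB f)
      = fmap RA (fmap NB (fmap RB (fmap NA (fmap RA (fmap NB f))))) \oc tau b)
  /\ (forall b : B,
      fmap RA (fmap NB (fmap RB (counit adjA (NB b)))) \oc tau b
      = fmap RA (fmap NB (unit adjB b)))
  /\ (forall b : B,
      fmap RA (counit adjB (NA (RA (NB b)))) \oc tau b = unit adjA (RA (NB b)))
  /\ (forall b : B,
      fmap RA (fmap NB (fmap RB (fmap NA (tau b)))) \oc tau b
      = tau (RB (NA (RA (NB b)))) \oc tau b).

Definition is_comonad_morphism (C C' : Comonad A)
  (t : forall x : A, hom (C x) (C' x)) : Prop :=
  (forall (x x' : A) (f : hom x x'), t x' \oc fmap C f = fmap C' f \oc t x)
  /\ (forall x : A, ceps C' x \oc t x = ceps C x)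
  /\ (forall x : A,
      delta C' x \oc t x = fmap C' (t x) \oc t (C x) \oc delta C x).

(* For F : T' -> T with R_A F = R'_A and R_B F = R'_B; the target adjunctions
   are given with right adjoints literally R_A F and R_B F. *)
Definition a_of (T T' : Category) (F : Functor T' T)
  (NA : Functor A T) (RA : Functor T A) (adjA : Adjunction NA RA)
  (NA' : Functor A T') (adjA' : Adjunction NA' (Fcomp RA F)) (x : A)
  : hom (NA x) (F (NA' x)) :=
  counit adjA (F (NA' x)) \oc fmap NA (unit adjA' x).

Definition b_of (T T' : Category) (F : Functor T' T)
  (NB : Functor B T) (RB : Functor T B) (adjB : Adjunction NB RB)
  (NB' : Functor B T') (adjB' : Adjunction NB' (Fcomp RB F)) (z : B)
  : hom (NB z) (F (NB' z)) :=
  counit adjB (F (NB' z)) \oc fmap NB (unit adjB' z).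

Definition is_RArr_morphism (T T' : Category) (F : Functor T' T)
  (NA : Functor A T) (RA : Functor T A) (adjA : Adjunction NA RA)
  (NB : Functor B T) (RB : Functor T B) (adjB : Adjunction NB RB)
  (C : Comonad A)
  (xi : forall y : T, hom (C (RA y)) (RA (NB (RB y))))
  (NA' : Functor A T') (adjA' : Adjunction NA' (Fcomp RA F))
  (NB' : Functor B T') (adjB' : Adjunction NB' (Fcomp RB F))
  (C' : Comonad A)
  (xi' : forall y : T', hom (C' (RA (F y))) (RA (F (NB' (RB (F y))))))
  (t : forall x : A, hom (C x) (C' x)) : Prop :=
  @is_comonad_morphism C C' t
  /\ (forall y : T',
      fmap RA (b_of adjB adjB' (RB (F y))) \oc xi (F y) = xi' y \oc t (RA (F y))).

(* F is a morphism of pre-torsors: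
   (R_A b R_B a R_A b) o tau = tau' o (R_A b), where the horizontal composite
   b R_B a R_A b : N_B R_B N_A R_A N_B => F N'_B R'_B N'_A R'_A N'_B has
   component  b_{R_B F N'_A R_A F N'_B} o N_B R_B (a_{R_A F N'_B} o N_A R_A b). *)
Definition is_pretorsor_morphism (T T' : Category) (F : Functor T' T)
  (NA : Functor A T) (RA : Functor T A) (adjA : Adjunction NA RA)
  (NB : Functor B T) (RB : Functor T B) (adjB : Adjunction NB RB)
  (NA' : Functor A T') (adjA' : Adjunction NA' (Fcomp RA F))
  (NB' : Functor B T') (adjB' : Adjunction NB' (Fcomp RB F))
  (tau : forall b : B, hom (RA (NB b)) (RA (NB (RB (NA (RA (NB b)))))))
  (tau' : forall b : B, hom (RA (F (NB' b)))
                            (RA (F (NB' (RB (F (NA' (RA (F (NB' b)))))))))) : Prop :=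
  forall b : B,
    fmap RA (b_of adjB adjB' (RB (F (NA' (RA (F (NB' b))))))
             \oc fmap NB (fmap RB (a_of adjA adjA' (RA (F (NB' b)))
                                   \oc fmap NA (fmap RA (b_of adjB adjB' b)))))
      \oc tau b
    = tau' b \oc fmap RA (b_of adjB adjB' b).

End RArr.

Arguments is_RArr_object {A B T NA RA} adjA {NB RB} adjB C xi xiinv.
Arguments tau_of {A B T NA RA} adjA {NB RB} adjB C xi xiinv b.
Arguments is_comonad_morphism {A} C C' t.
Arguments is_RArr_morphism {A B T T' F NA RA} adjA {NB RB} adjB C xi
  {NA'} adjA' {NB'} adjB' C' xi' t.

(* The invertible comonad arrow [xi] identifies [C R_A] with [R_A N_B R_B],
   and [coaction := xi^-1 N_B o R_A N_B eta^B] makes every [R_A N_B b] a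
   coalgebra for [C]; [xi] is then a morphism of such coalgebras.  [tau] is
   [coaction], followed by [C] applied to the unit of [N_A -| R_A],
   transported back along [xi]; its counit laws come from the counits of [C]
   and of the two adjunctions, and its coassociativity from the fact that
   [tau] is itself a coalgebra morphism.  For a morphism [(F, t)], the mates
   [a] and [b] of the identities [R_A F = R'_A], [R_B F = R'_B] carry the
   units of the first pair of adjunctions to those of the second, and the
   compatibility of [t] with [xi] and [xi'] transports every factor of [tau]
   to the matching factor of [tau']. *)
Set Implicit Arguments.
Unset Strict Implicit.

Section CategoryToolkit.
Variable K : Category.

Lemma postcomp_eq2 (a b c d : K) (g : hom b c) (f : hom a b) (k : hom a c) :
  g \oc f = k -> forall P : hom c d, P \oc g \oc f = P \oc k.
Proof. intros H P. rewrite <- cmp_assoc, H. reflexivity. Qed.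

Lemma postcomp_eq3 (a b c d e : K) (h : hom c d) (g : hom b c) (f : hom a b)
  (k : hom a d) :
  h \oc g \oc f = k -> forall P : hom d e, P \oc h \oc g \oc f = P \oc k.
Proof. intros H P. rewrite <- !cmp_assoc, <- H, !cmp_assoc. reflexivity. Qed.

Lemma postcomp_eq4 (a b c d e x : K) (i : hom d e) (h : hom c d) (g : hom b c)
  (f : hom a b) (k : hom a e) :
  i \oc h \oc g \oc f = k ->
  forall P : hom e x, P \oc i \oc h \oc g \oc f = P \oc k.
Proof. intros H P. rewrite <- !cmp_assoc, <- H, !cmp_assoc. reflexivity. Qed.

Lemma iso_cancel_l (a b c : K) (i : hom b c) (j : hom c b) (f : hom a b)
  (g : hom a c) :
  j \oc i = idm b -> i \oc f = g -> f = j \oc g.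
Proof. intros Hji H. rewrite <- H, cmp_assoc, Hji, cmp_id_l. reflexivity. Qed.

Lemma iso_cancel_r (a b c : K) (i : hom a b) (j : hom b a) (f : hom b c)
  (g : hom a c) :
  i \oc j = idm b -> f \oc i = g -> f = g \oc j.
Proof. intros Hij H. rewrite <- H, <- cmp_assoc, Hij, cmp_id_r. reflexivity. Qed.

Lemma iso_square_inv (x y x' y' : K) (i : hom x y) (j : hom y x)
  (i' : hom x' y') (j' : hom y' x') (g : hom x x') (h : hom y y') :
  i \oc j = idm y -> j' \oc i' = idm x' -> i' \oc g = h \oc i ->
  j' \oc h = g \oc j.
Proof.
  intros Hij Hji' H.
  apply (iso_cancel_r Hij). rewrite <- cmp_assoc, <- H, cmp_assoc, Hji', cmp_id_l.
  reflexivity.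
Qed.

End CategoryToolkit.

Ltac cat_norm := repeat rewrite ?cmp_assoc, ?cmp_id_l, ?cmp_id_r.

(* Rewrite with an equation between composites of up to four morphisms inside
   a left-associated composite. *)
Ltac rewrite_chain H :=
  first [ rewrite (postcomp_eq4 H) | rewrite (postcomp_eq3 H)
        | rewrite (postcomp_eq2 H) | rewrite H ]; cat_norm.

(* [b_of] is [a_of] taken over [B], so these lemmas serve both mates. *)
Section Mates.
Variables (X T T' : Category) (F : Functor T' T).
Variables (N : Functor X T) (R : Functor T X) (adj : Adjunction N R).
Variables (N' : Functor X T') (adj' : Adjunction N' (Fcomp R F)).

Lemma mate_unit (x : X) : fmap R (a_of adj adj' x) \oc unit adj x = unit adj' x.
Proof.
  unfold a_of. rewrite fmap_comp. cat_norm.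
  rewrite_chain (eq_sym (unit_nat adj (unit adj' x))).
  cbn [Fcomp fobj fmap]. rewrite (triangle_R adj). cat_norm. reflexivity.
Qed.

Lemma mate_unit_nat (x x' : X) (g : hom x x') :
  fmap R (a_of adj adj' x') \oc fmap R (fmap N g) \oc unit adj x
  = unit adj' x' \oc g.
Proof.
  rewrite_chain (eq_sym (unit_nat adj g)). rewrite_chain (mate_unit x').
  reflexivity.
Qed.

Lemma mate_nat (x x' : X) (f : hom x x') :
  a_of adj adj' x' \oc fmap N f = fmap F (fmap N' f) \oc a_of adj adj' x.
Proof.
  unfold a_of. cat_norm.
  assert (Hunit : fmap N (unit adj' x') \oc fmap N f
                  = fmap N (fmap R (fmap F (fmap N' f))) \oc fmap N (unit adj' x)).
  { rewrite <- !fmap_comp. f_equal. apply (unit_nat adj'). }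
  rewrite_chain Hunit. rewrite_chain (eq_sym (counit_nat adj (fmap F (fmap N' f)))).
  reflexivity.
Qed.

End Mates.

Section PreTorsorOfRArr.
Variables (A B T : Category).
Variables (NA : Functor A T) (RA : Functor T A) (adjA : Adjunction NA RA).
Variables (NB : Functor B T) (RB : Functor T B) (adjB : Adjunction NB RB).
Variable C : Comonad A.
Variable xi : forall y : T, hom (C (RA y)) (RA (NB (RB y))).
Variable xiinv : forall y : T, hom (RA (NB (RB y))) (C (RA y)).

Hypothesis xi_nat : forall (y y' : T) (g : hom y y'),
  xi y' \oc fmap C (fmap RA g) = fmap RA (fmap NB (fmap RB g)) \oc xi y.
Hypothesis xi_counit : forall y : T,
  fmap RA (counit adjB y) \oc xi y = ceps C (RA y).
Hypothesis xi_comult : forall y : T,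
  fmap RA (fmap NB (unit adjB (RB y))) \oc xi y
  = xi (NB (RB y)) \oc fmap C (xi y) \oc delta C (RA y).
Hypothesis xiinv_xi : forall y : T, xiinv y \oc xi y = idm (C (RA y)).
Hypothesis xi_xiinv : forall y : T, xi y \oc xiinv y = idm (RA (NB (RB y))).

Local Notation tau := (tau_of adjA adjB C xi xiinv).

Definition coaction (b : B) : hom (RA (NB b)) (C (RA (NB b))) :=
  xiinv (NB b) \oc fmap RA (fmap NB (unit adjB b)).

Lemma tau_coactionE (b : B) :
  tau b = xi (NA (RA (NB b))) \oc fmap C (unit adjA (RA (NB b))) \oc coaction b.
Proof. unfold tau_of, coaction. cat_norm. reflexivity. Qed.

Lemma xiinv_nat (y y' : T) (g : hom y y') :
  xiinv y' \oc fmap RA (fmap NB (fmap RB g)) = fmap C (fmap RA g) \oc xiinv y.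
Proof. exact (iso_square_inv (xi_xiinv y) (xiinv_xi y') (xi_nat g)). Qed.

Lemma xi_coaction (y : T) :
  fmap C (xi y) \oc delta C (RA y) = coaction (RB y) \oc xi y.
Proof.
  unfold coaction. rewrite <- cmp_assoc.
  apply (iso_cancel_l (xiinv_xi _)). rewrite cmp_assoc, xi_comult. cat_norm.
  reflexivity.
Qed.

Lemma coaction_nat (b b' : B) (f : hom b b') :
  coaction b' \oc fmap RA (fmap NB f) = fmap C (fmap RA (fmap NB f)) \oc coaction b.
Proof.
  unfold coaction. cat_norm.
  assert (Hunit : fmap RA (fmap NB (unit adjB b')) \oc fmap RA (fmap NB f)
      = fmap RA (fmap NB (fmap RB (fmap NB f))) \oc fmap RA (fmap NB (unit adjB b))).
  { rewrite <- !fmap_comp. rewrite (unit_nat adjB). reflexivity. }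
  rewrite_chain Hunit. rewrite_chain (xiinv_nat (fmap NB f)). reflexivity.
Qed.

Lemma coaction_counit (b : B) : ceps C (RA (NB b)) \oc coaction b = idm (RA (NB b)).
Proof.
  unfold coaction. cat_norm.
  rewrite_chain (eq_sym (iso_cancel_r (xi_xiinv (NB b)) (xi_counit (NB b)))).
  rewrite <- fmap_comp, (triangle_N adjB), fmap_id. reflexivity.
Qed.

Lemma coaction_coassoc (b : B) :
  fmap C (coaction b) \oc coaction b = delta C (RA (NB b)) \oc coaction b.
Proof.
  assert (Hunit2 : fmap RA (fmap NB (fmap RB (fmap NB (unit adjB b))))
                     \oc fmap RA (fmap NB (unit adjB b))
                   = fmap RA (fmap NB (unit adjB (RB (NB b))))
                     \oc fmap RA (fmap NB (unit adjB b))).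
  { rewrite <- !fmap_comp. rewrite (unit_nat adjB). reflexivity. }
  unfold coaction at 1 2. rewrite fmap_comp. cat_norm.
  rewrite_chain (eq_sym (xiinv_nat (fmap NB (unit adjB b)))). rewrite_chain Hunit2.
  rewrite <- (cmp_id_l (delta C _)), <- (fmap_id C), <- (xiinv_xi (NB b)), fmap_comp.
  cat_norm. rewrite_chain (xi_coaction (NB b)).
  unfold coaction. cat_norm. rewrite_chain (xi_xiinv (NB b)). reflexivity.
Qed.

Lemma tau_coaction (b : B) :
  fmap C (tau b) \oc coaction b = coaction (RB (NA (RA (NB b)))) \oc tau b.
Proof.
  rewrite !tau_coactionE, !fmap_comp. cat_norm.
  rewrite_chain (coaction_coassoc b).
  rewrite_chain (eq_sym (delta_nat C (unit adjA (RA (NB b))))).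
  rewrite_chain (xi_coaction (NA (RA (NB b)))). reflexivity.
Qed.

Lemma tau_nat (b b' : B) (f : hom b b') :
  tau b' \oc fmap RA (fmap NB f)
  = fmap RA (fmap NB (fmap RB (fmap NA (fmap RA (fmap NB f))))) \oc tau b.
Proof.
  rewrite !tau_coactionE. cat_norm.
  rewrite_chain (coaction_nat f).
  assert (Hunit : fmap C (unit adjA (RA (NB b'))) \oc fmap C (fmap RA (fmap NB f))
      = fmap C (fmap RA (fmap NA (fmap RA (fmap NB f))))
        \oc fmap C (unit adjA (RA (NB b)))).
  { rewrite <- !fmap_comp. rewrite (unit_nat adjA). reflexivity. }
  rewrite_chain Hunit. rewrite_chain (xi_nat (fmap NA (fmap RA (fmap NB f)))).
  reflexivity.
Qed.

Lemma tau_counitA (b : B) :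
  fmap RA (fmap NB (fmap RB (counit adjA (NB b)))) \oc tau b
  = fmap RA (fmap NB (unit adjB b)).
Proof.
  unfold tau_of. cat_norm.
  rewrite_chain (eq_sym (xi_nat (counit adjA (NB b)))).
  assert (Htriangle : fmap C (fmap RA (counit adjA (NB b)))
                       \oc fmap C (unit adjA (RA (NB b))) = idm _).
  { rewrite <- fmap_comp, (triangle_R adjA), fmap_id. reflexivity. }
  rewrite_chain Htriangle. rewrite_chain (xi_xiinv (NB b)). reflexivity.
Qed.

Lemma tau_counitB (b : B) :
  fmap RA (counit adjB (NA (RA (NB b)))) \oc tau b = unit adjA (RA (NB b)).
Proof.
  rewrite tau_coactionE. cat_norm.
  rewrite_chain (xi_counit (NA (RA (NB b)))).
  rewrite_chain (ceps_nat C (unit adjA (RA (NB b)))).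
  rewrite_chain (coaction_counit b). reflexivity.
Qed.

Lemma tau_coassoc (b : B) :
  fmap RA (fmap NB (fmap RB (fmap NA (tau b)))) \oc tau b
  = tau (RB (NA (RA (NB b)))) \oc tau b.
Proof.
  transitivity (fmap RA (fmap NB (fmap RB (fmap NA (tau b))))
    \oc (xi _ \oc fmap C (unit adjA (RA (NB b))) \oc coaction b)).
  { f_equal. apply tau_coactionE. }
  cat_norm.
  rewrite_chain (eq_sym (xi_nat (fmap NA (tau b)))).
  assert (Hunit : fmap C (fmap RA (fmap NA (tau b))) \oc fmap C (unit adjA (RA (NB b)))
      = fmap C (unit adjA _) \oc fmap C (tau b)).
  { rewrite <- !fmap_comp. rewrite (unit_nat adjA). reflexivity. }
  rewrite_chain Hunit. rewrite_chain (tau_coaction b).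
  rewrite (tau_coactionE (RB _)). cat_norm. reflexivity.
Qed.

Lemma pre_torsor_of_RArr : is_pre_torsor adjA adjB tau.
Proof.
  split; [exact tau_nat | split; [exact tau_counitA | split]].
  - exact tau_counitB.
  - exact tau_coassoc.
Qed.

End PreTorsorOfRArr.

Section PreTorsorMorphismOfRArr.
Variables (A B T T' : Category) (F : Functor T' T).
Variables (NA : Functor A T) (RA : Functor T A) (adjA : Adjunction NA RA).
Variables (NB : Functor B T) (RB : Functor T B) (adjB : Adjunction NB RB).
Variables (NA' : Functor A T') (adjA' : Adjunction NA' (Fcomp RA F)).
Variables (NB' : Functor B T') (adjB' : Adjunction NB' (Fcomp RB F)).
Variables (C C' : Comonad A) (t : forall x : A, hom (C x) (C' x)).
Variable xi : forall y : T, hom (C (RA y)) (RA (NB (RB y))).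
Variable xiinv : forall y : T, hom (RA (NB (RB y))) (C (RA y)).
Variable xi' : forall y : T', hom (C' (RA (F y))) (RA (F (NB' (RB (F y))))).
Variable xiinv' : forall y : T', hom (RA (F (NB' (RB (F y))))) (C' (RA (F y))).

Hypothesis xi_nat : forall (y y' : T) (g : hom y y'),
  xi y' \oc fmap C (fmap RA g) = fmap RA (fmap NB (fmap RB g)) \oc xi y.
Hypothesis xiinv_xi : forall y : T, xiinv y \oc xi y = idm (C (RA y)).
Hypothesis xi_xiinv : forall y : T, xi y \oc xiinv y = idm (RA (NB (RB y))).
Hypothesis xiinv_xi' : forall y : T', xiinv' y \oc xi' y = idm (C' (RA (F y))).
Hypothesis t_nat : forall (x x' : A) (f : hom x x'),
  t x' \oc fmap C f = fmap C' f \oc t x.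
Hypothesis xi_t : forall y : T',
  fmap RA (b_of adjB adjB' (RB (F y))) \oc xi (F y) = xi' y \oc t (RA (F y)).

Local Notation b := (b_of adjB adjB').
Local Notation a := (a_of adjA adjA').

Lemma t_xiinv (y : T') : t (RA (F y)) \oc xiinv (F y) = xiinv' y \oc fmap RA (b (RB (F y))).
Proof.
  apply (iso_cancel_l (xiinv_xi' y)). cat_norm. rewrite <- xi_t.
  rewrite <- cmp_assoc, xi_xiinv, cmp_id_r. reflexivity.
Qed.

Lemma pretorsor_morphism_of_RArr :
  is_pretorsor_morphism adjA adjB adjA' adjB'
    (tau_of adjA adjB C xi xiinv) (tau_of adjA' adjB' C' xi' xiinv').
Proof.
  intros z. unfold tau_of. rewrite !fmap_comp. cat_norm. cbn [Fcomp fobj fmap].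
  set (bz := b z).
  assert (Hunit_a : fmap C (fmap RA (a (RA (F (NB' z)))))
                      \oc fmap C (fmap RA (fmap NA (fmap RA bz)))
                      \oc fmap C (unit adjA (RA (NB z)))
                    = fmap C (unit adjA' (RA (F (NB' z)))) \oc fmap C (fmap RA bz)).
  { rewrite <- !fmap_comp. f_equal. rewrite fmap_comp. apply mate_unit_nat. }
  assert (Hunit_b : fmap RA (fmap NB (fmap RB bz)) \oc fmap RA (fmap NB (unit adjB z))
                    = fmap RA (fmap NB (unit adjB' z))).
  { rewrite <- !fmap_comp. f_equal. f_equal. exact (mate_unit adjB adjB' z). }
  assert (Hnat_b : fmap RA (b (RB (F (NB' z)))) \oc fmap RA (fmap NB (unit adjB' z))
                   = fmap RA (fmap F (fmap NB' (unit adjB' z))) \oc fmap RA bz).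
  { rewrite <- !fmap_comp. f_equal. exact (mate_nat adjB adjB' (unit adjB' z)). }
  rewrite_chain (eq_sym (xi_nat (fmap NA (fmap RA bz)))).
  rewrite_chain (eq_sym (xi_nat (a (RA (F (NB' z)))))).
  rewrite_chain (xi_t (NA' (RA (F (NB' z))))).
  rewrite_chain Hunit_a.
  rewrite_chain (t_nat (unit adjA' (RA (F (NB' z))))).
  rewrite_chain (eq_sym (xiinv_nat xi_nat xiinv_xi xi_xiinv bz)).
  rewrite_chain Hunit_b.
  rewrite_chain (t_xiinv (NB' z)).
  rewrite_chain Hnat_b.
  reflexivity.
Qed.

End PreTorsorMorphismOfRArr.

Theorem mainTheorem7 (A B : Category) :
  (* (1) every object of RArr(A,B) yields a pre-torsor *)
  (forall (T : Category)
     (NA : Functor A T) (RA : Functor T A) (adjA : Adjunction NA RA)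
     (NB : Functor B T) (RB : Functor T B) (adjB : Adjunction NB RB)
     (C : Comonad A)
     (xi : forall y : T, hom (C (RA y)) (RA (NB (RB y))))
     (xiinv : forall y : T, hom (RA (NB (RB y))) (C (RA y))),
     is_RArr_object adjA adjB C xi xiinv ->
     is_pre_torsor adjA adjB (tau_of adjA adjB C xi xiinv))
  /\
  (* (2) every morphism (F,t) of RArr(A,B) gives a morphism of pre-torsors *)
  (forall (T : Category)
     (NA : Functor A T) (RA : Functor T A) (adjA : Adjunction NA RA)
     (NB : Functor B T) (RB : Functor T B) (adjB : Adjunction NB RB)
     (C : Comonad A)
     (xi : forall y : T, hom (C (RA y)) (RA (NB (RB y))))
     (xiinv : forall y : T, hom (RA (NB (RB y))) (C (RA y)))
     (T' : Category) (F : Functor T' T)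
     (NA' : Functor A T') (adjA' : Adjunction NA' (Fcomp RA F))
     (NB' : Functor B T') (adjB' : Adjunction NB' (Fcomp RB F))
     (C' : Comonad A)
     (xi' : forall y : T', hom (C' (RA (F y))) (RA (F (NB' (RB (F y))))))
     (xiinv' : forall y : T', hom (RA (F (NB' (RB (F y))))) (C' (RA (F y))))
     (t : forall x : A, hom (C x) (C' x)),
     is_RArr_object adjA adjB C xi xiinv ->
     is_RArr_object adjA' adjB' C' xi' xiinv' ->
     is_RArr_morphism adjA adjB C xi adjA' adjB' C' xi' t ->
     is_pretorsor_morphism adjA adjB adjA' adjB'
       (tau_of adjA adjB C xi xiinv) (tau_of adjA' adjB' C' xi' xiinv')).
Proof.
  split.
  - intros T NA RA adjA NB RB adjB C xi xiinv (Hnat & Hcounit & Hcomult & Hinv & Hinv').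
    exact (pre_torsor_of_RArr adjA Hnat Hcounit Hcomult Hinv Hinv').
  - intros T NA RA adjA NB RB adjB C xi xiinv T' F NA' adjA' NB' adjB' C' xi' xiinv' t
      (Hnat & _ & _ & Hinv & Hinv') (_ & _ & _ & Hinv1' & _) ((Htnat & _) & Hxi_t).
    exact (pretorsor_morphism_of_RArr adjA adjA' Hnat Hinv Hinv' Hinv1' Htnat Hxi_t).
Qed.
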